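(* Let $(L,\le,(\sqsubseteq_\alpha)_{\alpha<\kappa})$ be a model of Axioms 1–4. Then $(L,\sqsubseteq)$ is a complete lattice. More precisely, $\perp\sqsubseteq x$ for every $x\in L$, and every nonempty subset of $L$ has a least upper bound with respect to $\sqsubseteq$.
   Context: Setting (model of Axioms 1–4). Let $(L,\le)$ be a complete lattice with join operation $\bigvee$ and least element $\perp$. Let $\kappa>0$ be an ordinal, and for each ordinal $\alpha<\kappa$ let $\sqsubseteq_\alpha$ be a preorder (reflexive and transitive relation) on $L$. Derived relations: - $x=_\alpha y$ means $x\sqsubseteq_\alpha y$ and $y\sqsubseteq_\alpha x$. - $x\sqsubset_\alpha y$ means $x\sqsubseteq_\alpha y$ and not $x=_\alpha y$. - $\sqsubset=\bigcup_{\alpha<\kappa}\sqsubset_\alpha$. - $x\sqsubseteq y$ means $x\sqsubset y$ or $x=y$. Derived sets, for $x\in L$ and $\alpha<\kappa$: - $(x]_\alpha=\{y\in L:\forall\beta<\alpha,\ x=_\beta y\}$. - $[x]_\alpha=\{y\in L: x=_\alpha y\}$. For a set $X$, $X\sqsubseteq_\alpha y$ means $x\sqsubseteq_\alpha y$ for all $x\in X$. The structure is a model of Axioms 1–4 if: - (A1) for all $\alpha<\beta<\kappa$, $x\sqsubseteq_\beta y$ implies $x=_\alpha y$; - (A2) $\bigcap_{\alpha<\kappa}=_\alpha$ is the identity relation on $L$; - (A3) for every $x\in L$, every $\alpha<\kappa$ and every $X\subseteq(x]_\alpha$ there is $y\in(x]_\alpha$ with $X\sqsubseteq_\alpha y$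 such that for all $z\in(x]_\alpha$ with $X\sqsubseteq_\alpha z$ we have $y\sqsubseteq_\alpha z$ and $y\le z$; - (A4) for every nonempty $X\subseteq L$, every $\alpha<\kappa$ and every $y\in L$, if $y=_\alpha x$ for all $x\in X$ then $y=_\alpha\bigvee X$. *)

Set Implicit Arguments.

Definition partial_order {L : Type} (le : L -> L -> Prop) : Prop :=
  (forall x, le x x) /\
  (forall x y z, le x y -> le y z -> le x z) /\
  (forall x y, le x y -> le y x -> x = y).

Definition is_lub {L : Type} (le : L -> L -> Prop) (X : L -> Prop) (y : L) : Prop :=
  (forall x, X x -> le x y) /\
  (forall z, (forall x, X x -> le x z) -> le y z).

Definition complete_lattice {L : Type} (le : L -> L -> Prop)
    (sup : (L -> Prop) -> L) : Prop :=
  partial_order le /\ forall X : L -> Prop, is_lub le X (sup X).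

Definition bot {L : Type} (sup : (L -> Prop) -> L) : L := sup (fun _ => False).

(* ---- Ordinals below kappa: a nonempty well-ordered index type (I, lt) ---- *)
Definition well_order {I : Type} (lt : I -> I -> Prop) : Prop :=
  (forall a, ~ lt a a) /\
  (forall a b c, lt a b -> lt b c -> lt a c) /\
  (forall a b, lt a b \/ a = b \/ lt b a) /\
  well_founded lt.

Definition preorder_family {I L : Type} (pre : I -> L -> L -> Prop) : Prop :=
  forall a, (forall x, pre a x x) /\ (forall x y z, pre a x y -> pre a y z -> pre a x z).

Definition eqa {I L : Type} (pre : I -> L -> L -> Prop) (a : I) (x y : L) : Prop :=
  pre a x y /\ pre a y x.

Definition lta {I L : Type} (pre : I -> L -> L -> Prop) (a : I) (x y : L) : Prop :=
  pre a x y /\ ~ eqa pre a x y.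

Definition sqlt {I L : Type} (pre : I -> L -> L -> Prop) (x y : L) : Prop :=
  exists a : I, lta pre a x y.

Definition sqle {I L : Type} (pre : I -> L -> L -> Prop) (x y : L) : Prop :=
  sqlt pre x y \/ x = y.

Definition down {I L : Type} (lt : I -> I -> Prop) (pre : I -> L -> L -> Prop)
    (x : L) (a : I) : L -> Prop :=
  fun y => forall b, lt b a -> eqa pre b x y.

Definition cls {I L : Type} (pre : I -> L -> L -> Prop) (x : L) (a : I) : L -> Prop :=
  fun y => eqa pre a x y.

Definition Axiom1 {I L : Type} (lt : I -> I -> Prop) (pre : I -> L -> L -> Prop) : Prop :=
  forall a b, lt a b -> forall x y, pre b x y -> eqa pre a x y.

Definition Axiom2 {I L : Type} (pre : I -> L -> L -> Prop) : Prop :=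
  forall x y, (forall a, eqa pre a x y) <-> x = y.

Definition Axiom3 {I L : Type} (le : L -> L -> Prop) (lt : I -> I -> Prop)
    (pre : I -> L -> L -> Prop) : Prop :=
  forall (x : L) (a : I) (X : L -> Prop),
    (forall w, X w -> down lt pre x a w) ->
    exists y, down lt pre x a y /\ (forall w, X w -> pre a w y) /\
      (forall z, down lt pre x a z -> (forall w, X w -> pre a w z) ->
         pre a y z /\ le y z).

Definition Axiom4 {I L : Type} (sup : (L -> Prop) -> L) (pre : I -> L -> L -> Prop) : Prop :=
  forall (X : L -> Prop) (a : I) (y : L),
    (exists x, X x) -> (forall x, X x -> eqa pre a y x) -> eqa pre a y (sup X).

(* Write b ≤ d for "not d < b" on the ordinals below κ.  The preorders ⊑_a
   give equivalences =_a, and by Axiom 2 two distinct elements have a first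
   level a at which they differ.  With Axiom 1 this shows that ⊏ is
   transitive and irreflexive, so ⊑ is a partial order; Axiom 3 applied to
   the empty family shows that ⊥ is ⊑-below everything.

   For least upper bounds of a family X we call w a level-b lub when, among
   the elements agreeing with w strictly below b, it is the ⊑_b-least
   upper bound of the members of X in that class.  An element that is a
   level-b lub at every level is the ⊑-lub of X.  Such an element is built by
   transfinite recursion: an approximation at d is a level-b lub for all
   b ≤ d which is ≤-least among the elements agreeing with it up to d.
   Approximations are unique, restrict to smaller levels, and the ≤-join of
   a family of approximations agrees (by Axiom 4) with each of them; at a new
   level Axiom 3 supplies the next approximation.  The join of all
   approximations is then a level-b lub at every level b. *)
From Stdlib Require Import Classical.

Section Model.

Variables (L : Type) (le : L -> L -> Prop) (sup : (L -> Prop) -> L)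
  (K : Type) (lt : K -> K -> Prop) (pre : K -> L -> L -> Prop).

Hypothesis lattice : complete_lattice le sup.
Hypothesis ordinals : well_order lt.
Hypothesis preorders : preorder_family pre.
Hypothesis ax1 : Axiom1 lt pre.
Hypothesis ax2 : Axiom2 pre.
Hypothesis ax3 : Axiom3 le lt pre.
Hypothesis ax4 : Axiom4 sup pre.

(* Set after the hypotheses, so that the axioms keep explicit arguments. *)
Set Implicit Arguments.

Local Notation "b <=K d" := (~ lt d b) (at level 70).

Lemma le_refl x : le x x.
Proof. destruct lattice as [[h _] _]; apply h. Qed.

Lemma le_trans x y z : le x y -> le y z -> le x z.
Proof. destruct lattice as [[_ [h _]] _]; apply h. Qed.

Lemma le_antisym x y : le x y -> le y x -> x = y.
Proof. destruct lattice as [[_ [_ h]] _]; apply h. Qed.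

Lemma sup_upper {X : L -> Prop} {x : L} : X x -> le x (sup X).
Proof. destruct lattice as [_ h]; apply (h X). Qed.

Lemma sup_least (X : L -> Prop) z : (forall x, X x -> le x z) -> le (sup X) z.
Proof. destruct lattice as [_ h]; apply (h X). Qed.

Lemma lt_irrefl a : ~ lt a a.
Proof. destruct ordinals as [h _]; apply h. Qed.

Lemma lt_trans a b c : lt a b -> lt b c -> lt a c.
Proof. destruct ordinals as [_ [h _]]; apply h. Qed.

Lemma lt_total a b : lt a b \/ a = b \/ lt b a.
Proof. destruct ordinals as [_ [_ [h _]]]; apply h. Qed.

Lemma lt_wf : well_founded lt.
Proof. destruct ordinals as [_ [_ [_ h]]]; exact h. Qed.

Lemma lt_le c b : lt c b -> c <=K b.
Proof. intros hcb hbc. exact (lt_irrefl (lt_trans hcb hbc)). Qed.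

Lemma index_le_cases b d : b <=K d -> lt b d \/ b = d.
Proof. intro h. destruct (lt_total b d) as [h'|[h'|h']]; auto; contradiction. Qed.

Lemma index_lt_le c b d : lt c b -> b <=K d -> c <=K d.
Proof. intros hcb hbd hdc. apply hbd. exact (lt_trans hdc hcb). Qed.

Lemma index_le_trans b d g : b <=K d -> d <=K g -> b <=K g.
Proof.
  intros hbd hdg hgb. destruct (index_le_cases hdg) as [h| ->].
  - apply hbd. exact (lt_trans h hgb).
  - exact (hbd hgb).
Qed.

Lemma least_index (P : K -> Prop) :
  (exists a, P a) -> exists a, P a /\ forall b, lt b a -> ~ P b.
Proof.
  intros [a Pa]. induction a as [a IH] using (well_founded_ind lt_wf).
  destruct (classic (exists b, lt b a /\ P b)) as [[b [hb Pb]]|hnone].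
  - exact (IH b hb Pb).
  - exists a. split; [exact Pa|]. intros b hb Pb. apply hnone. exists b; auto.
Qed.

Lemma pre_refl a x : pre a x x.
Proof. apply (preorders a). Qed.

Lemma pre_trans a x y z : pre a x y -> pre a y z -> pre a x z.
Proof. apply (preorders a). Qed.

Lemma eqa_refl a x : eqa pre a x x.
Proof. split; apply pre_refl. Qed.

Lemma eqa_sym a x y : eqa pre a x y -> eqa pre a y x.
Proof. intros [h1 h2]; split; assumption. Qed.

Lemma eqa_trans a x y z : eqa pre a x y -> eqa pre a y z -> eqa pre a x z.
Proof. intros [h1 h2] [h3 h4]; split; eapply pre_trans; eassumption. Qed.

Lemma first_difference x y :
  x <> y -> exists a, ~ eqa pre a x y /\ down lt pre x a y.
Proof.
  intro hne. destruct (least_index (fun a => ~ eqa pre a x y)) as [a [hna hlow]].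
  - apply NNPP. intro hall. apply hne, ax2. intro a.
    apply NNPP. intro h. apply hall. exists a; exact h.
  - exists a. split; [exact hna|]. intros b hb. apply NNPP, hlow, hb.
Qed.

(* ⊏ is transitive: compare the two levels, using Axiom 1 at the lower one. *)
Lemma sqlt_trans x y z : sqlt pre x y -> sqlt pre y z -> sqlt pre x z.
Proof.
  intros [a [hxy hnxy]] [b [hyz hnyz]].
  destruct (lt_total a b) as [hab|[<-|hba]].
  - pose proof (ax1 a b hab y z hyz) as eyz. exists a. split.
    + exact (pre_trans hxy (proj1 eyz)).
    + intro exz. apply hnxy. exact (eqa_trans exz (eqa_sym eyz)).
  - exists a. split; [exact (pre_trans hxy hyz)|].
    intro exz. apply hnyz. split; [exact hyz | exact (pre_trans (proj2 exz) hxy)].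
  - pose proof (ax1 b a hba x y hxy) as exy. exists b. split.
    + exact (pre_trans (proj1 exy) hyz).
    + intro exz. apply hnyz. exact (eqa_trans (eqa_sym exy) exz).
Qed.

Lemma sqlt_irrefl x : ~ sqlt pre x x.
Proof. intros [a [_ h]]. apply h, eqa_refl. Qed.

Lemma sqle_partial_order : partial_order (sqle pre).
Proof.
  split; [intro x; right; reflexivity|split].
  - intros x y z [hxy| <-] [hyz| <-].
    + left. exact (sqlt_trans hxy hyz).
    + left. exact hxy.
    + left. exact hyz.
    + right. reflexivity.
  - intros x y [hxy| e] [hyx| e']; auto.
    exfalso. exact (sqlt_irrefl (sqlt_trans hxy hyx)).
Qed.

(* ⊥ is ⊑-least: at the first level where ⊥ and x differ, the ≤-least element
   of (x]_a given by Axiom 3 is ⊥ itself, hence ⊥ ⊑_a x. *)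
Lemma bot_least x : sqle pre (bot sup) x.
Proof.
  unfold bot. set (empty := fun _ : L => False).
  destruct (classic (sup empty = x)) as [e|hne]; [right; exact e|left].
  destruct (first_difference hne) as [a [hna hdown]].
  destruct (ax3 x a empty) as [w [_ [_ hleast]]]; [intros ? []|].
  assert (hbot : down lt pre x a (sup empty)) by (intros c hc; apply eqa_sym, hdown, hc).
  assert (hx : down lt pre x a x) by (intros c _; apply eqa_refl).
  assert (w = sup empty) as ->.
  { apply le_antisym.
    - exact (proj2 (hleast _ hbot ltac:(intros ? []))).
    - apply sup_least. intros ? []. }
  exists a. split; [exact (proj1 (hleast x hx ltac:(intros ? []))) | exact hna].
Qed.

Lemma down_sym w b w' : down lt pre w b w' -> down lt pre w' b w.
Proof. intros h c hc. apply eqa_sym, h, hc. Qed.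

Lemma down_transfer w w' b x :
  down lt pre w b w' -> down lt pre w b x -> down lt pre w' b x.
Proof. intros hw' hx c hc. exact (eqa_trans (eqa_sym (hw' c hc)) (hx c hc)). Qed.

Definition trace (X : L -> Prop) (w : L) (b : K) : L -> Prop :=
  fun x => X x /\ down lt pre w b x.

Definition level_lub (X : L -> Prop) (w : L) (b : K) : Prop :=
  (forall x, trace X w b x -> pre b x w) /\
  (forall z, down lt pre w b z -> (forall x, trace X w b x -> pre b x z) -> pre b w z).

(* An element that is a level lub at every level is the ⊑-lub: compare it
   with a bound at the first level where they differ. *)
Lemma lub_of_level_lubs (X : L -> Prop) Y :
  (forall b, level_lub X Y b) -> is_lub (sqle pre) X Y.
Proof.
  intro hY. split.
  - intros x hx. destruct (classic (x = Y)) as [e|hne]; [right; exact e|left].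
    destruct (first_difference hne) as [a [hna hdown]].
    exists a. split; [|exact hna].
    apply (proj1 (hY a)). split; [exact hx | exact (down_sym hdown)].
  - intros z hz. destruct (classic (Y = z)) as [e|hne]; [right; exact e|left].
    destruct (first_difference hne) as [a [hna hdown]].
    exists a. split; [|exact hna]. apply (proj2 (hY a)); [exact hdown|].
    intros x [hx hxd]. destruct (hz x hx) as [[c [hc hnc]]| <-]; [|apply pre_refl].
    (* x ⊏_c z forces a ≤ c, since x and z both agree with Y below a *)
    destruct (lt_total c a) as [hca|[<-|hac]].
    + exfalso. apply hnc. exact (eqa_trans (eqa_sym (hxd c hca)) (hdown c hca)).
    + exact hc.
    + exact (proj1 (ax1 a c hac x z hc)).
Qed.

Lemma level_lub_transfer (X : L -> Prop) w w' b :
  down lt pre w b w' -> eqa pre b w w' -> level_lub X w b -> level_lub X w' b.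
Proof.
  intros hdown heq [hub hleast]. pose proof (down_sym hdown) as hdown'.
  split.
  - intros x [hx hxd]. apply (pre_trans (y := w)); [|exact (proj1 heq)].
    apply hub. split; [exact hx | exact (down_transfer hdown' hxd)].
  - intros z hz hzub. apply (pre_trans (y := w)); [exact (proj2 heq)|]. apply hleast.
    + exact (down_transfer hdown' hz).
    + intros x [hx hxd]. apply hzub. split; [exact hx | exact (down_transfer hdown hxd)].
Qed.

Definition agree_upto (d : K) (w z : L) : Prop := forall b, b <=K d -> eqa pre b w z.

Definition approx (X : L -> Prop) (d : K) (w : L) : Prop :=
  (forall b, b <=K d -> level_lub X w b) /\ (forall z, agree_upto d w z -> le w z).

(* Two approximations at d agree level by level (by induction on levels),
   hence coincide by their ≤-minimality. *)
Lemma approx_unique (X : L -> Prop) d w w' : approx X d w -> approx X d w' -> w = w'.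
Proof.
  intros [hlub hmin] [hlub' hmin'].
  assert (hagree : agree_upto d w w').
  { intro b. induction b as [b IH] using (well_founded_ind lt_wf). intro hb.
    assert (hdown : down lt pre w b w')
      by (intros c hc; apply IH; [exact hc | exact (index_lt_le hc hb)]).
    destruct (hlub b hb) as [hub hleast]. destruct (hlub' b hb) as [hub' hleast'].
    split.
    - apply hleast; [exact hdown|]. intros x [hx hxd].
      apply hub'. split; [exact hx | exact (down_transfer hdown hxd)].
    - apply hleast'; [exact (down_sym hdown)|]. intros x [hx hxd].
      apply hub. split; [exact hx | exact (down_transfer (down_sym hdown) hxd)]. }
  apply le_antisym; [apply hmin | apply hmin']; [exact hagree|].
  intros b hb. apply eqa_sym, hagree, hb.
Qed.

(* An approximation at g yields one at every d ≤ g: the ≤-least element of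
   the ⊑_d-upper class of w given by Axiom 3. *)
Lemma approx_restrict (X : L -> Prop) g d w :
  approx X g w -> d <=K g -> exists w', approx X d w' /\ agree_upto d w w' /\ le w' w.
Proof.
  intros [hlub hmin] hdg.
  destruct (ax3 w d (fun v => v = w)) as [w' [hdown [hub hleast]]].
  { intros v ->. intros c _. apply eqa_refl. }
  assert (hww' : pre d w w') by (apply hub; reflexivity).
  assert (hwub : forall v, v = w -> pre d v w) by (intros v ->; apply pre_refl).
  destruct (hleast w (fun c _ => eqa_refl c w) hwub) as [hw'w hle].
  assert (hagree : agree_upto d w w').
  { intros b hb. destruct (index_le_cases hb) as [hbd| ->].
    - exact (hdown b hbd).
    - split; assumption. }
  exists w'. split; [|split; [exact hagree | exact hle]]. split.
  - intros b hb. apply (level_lub_transfer (w := w)).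
    + intros c hc. exact (hagree c (index_lt_le hc hb)).
    + exact (hagree b hb).
    + exact (hlub b (index_le_trans hb hdg)).
  - intros z hz. refine (proj2 (hleast z _ _)).
    + intros c hc. exact (eqa_trans (hagree c (lt_le hc)) (hz c (lt_le hc))).
    + intros v ->. exact (pre_trans hww' (proj1 (hz d (@lt_irrefl _)))).
Qed.

Lemma approx_compat (X : L -> Prop) d d' w w' :
  approx X d w -> approx X d' w' -> d <=K d' -> agree_upto d w w' /\ le w w'.
Proof.
  intros hw hw' hdd'. destruct (approx_restrict hw' hdd') as [w'' [hw'' [hagree hle]]].
  rewrite (approx_unique hw hw''). split; [|exact hle].
  intros b hb. apply eqa_sym, hagree, hb.
Qed.

Lemma sup_eq_cofinal {G H : L -> Prop} :
  (forall v, H v -> G v) -> (forall v, G v -> exists u, H u /\ le v u) -> sup G = sup H.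
Proof.
  intros hsub hcof. apply le_antisym; apply sup_least; intros v hv.
  - destruct (hcof v hv) as [u [hu hvu]]. exact (le_trans hvu (sup_upper hu)).
  - exact (sup_upper (hsub v hv)).
Qed.

Definition approx_join (X : L -> Prop) (S : K -> Prop) : L :=
  sup (fun v => exists d, S d /\ approx X d v).

(* The join agrees at level d with the approximation at any d ∈ S: it equals
   the join of the approximations at levels d' ≥ d, which all agree with it
   at level d, so Axiom 4 applies. *)
Lemma approx_join_agree {X : L -> Prop} {S : K -> Prop} {d : K} {w : L} :
  S d -> approx X d w -> eqa pre d (approx_join X S) w.
Proof.
  intros hSd hw. unfold approx_join.
  set (above := fun v => exists d', (S d' /\ d <=K d') /\ approx X d' v).
  assert (hwabove : above w)
    by (exists d; split; [split; [exact hSd | apply lt_irrefl] | exact hw]).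
  rewrite (sup_eq_cofinal (H := above)).
  - apply eqa_sym, ax4; [exists w; exact hwabove|].
    intros v [d' [[_ hdd'] hv]]. exact (proj1 (approx_compat hw hv hdd') d (@lt_irrefl _)).
  - intros v [d' [[hS _] hv]]. exists d'. split; assumption.
  - intros v [d' [hS hv]]. destruct (classic (lt d' d)) as [hlt|hnlt].
    + exists w. split; [exact hwabove | exact (proj2 (approx_compat hv hw (lt_le hlt)))].
    + exists v. split; [exists d'; auto | apply le_refl].
Qed.

Lemma approx_join_below {X : L -> Prop} {S : K -> Prop} {d : K} {w : L} {c : K} :
  S c -> approx X d w -> c <=K d -> eqa pre c (approx_join X S) w.
Proof.
  intros hSc hw hcd. destruct (approx_restrict hw hcd) as [w' [hw' [hagree _]]].
  exact (eqa_trans (approx_join_agree hSc hw') (eqa_sym (hagree c (@lt_irrefl _)))).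
Qed.

Lemma level_lub_step (X : L -> Prop) u g :
  exists y, down lt pre u g y /\ level_lub X y g /\ (forall z, agree_upto g y z -> le y z).
Proof.
  destruct (ax3 u g (trace X u g)) as [y [hy [hub hleast]]]; [intros x [_ hx]; exact hx|].
  exists y. split; [exact hy|].
  assert (hdowny : forall z, down lt pre y g z -> down lt pre u g z)
    by (intros z hz; exact (down_transfer (down_sym hy) hz)).
  assert (htrace : forall x, trace X y g x -> trace X u g x)
    by (intros x [hx hxd]; split; [exact hx | exact (hdowny x hxd)]).
  split; [split|].
  - intros x hx. apply hub, htrace, hx.
  - intros z hz hzub. refine (proj1 (hleast z (hdowny z hz) _)).
    intros x [hx hxd]. apply hzub. split; [exact hx | exact (down_transfer hy hxd)].
  - intros z hz. refine (proj2 (hleast z _ _)).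
    + apply hdowny. intros c hc. exact (hz c (lt_le hc)).
    + intros x hx. exact (pre_trans (hub x hx) (proj1 (hz g (@lt_irrefl _)))).
Qed.

(* Approximations exist at every level, by well-founded recursion: at g take
   the Axiom 3 step over the join of all approximations below g. *)
Lemma approx_exists (X : L -> Prop) g : exists w, approx X g w.
Proof.
  induction g as [g IH] using (well_founded_ind lt_wf).
  set (below := fun d => lt d g).
  destruct (level_lub_step X (approx_join X below) g) as [y [hy [hlub hmin]]].
  exists y. split; [|exact hmin].
  intros b hb. destruct (index_le_cases hb) as [hbg| ->]; [|exact hlub].
  destruct (IH b hbg) as [w hw].
  assert (hwy : forall c, c <=K b -> eqa pre c w y).
  { intros c hcb.
    assert (hcg : below c)
      by (destruct (index_le_cases hcb) as [h| ->]; [exact (lt_trans h hbg) | exact hbg]).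
    exact (eqa_trans (eqa_sym (approx_join_below hcg hw hcb)) (hy c hcg)). }
  apply (level_lub_transfer (w := w)).
  - intros c hc. exact (hwy c (lt_le hc)).
  - exact (hwy b (@lt_irrefl _)).
  - exact (proj1 hw b (@lt_irrefl _)).
Qed.

(* The join of all approximations is a level lub everywhere, hence the ⊑-lub. *)
Lemma exists_lub (X : L -> Prop) : exists Y, is_lub (sqle pre) X Y.
Proof.
  set (all := fun _ : K => True).
  exists (approx_join X all). apply lub_of_level_lubs. intro b.
  destruct (approx_exists X b) as [w hw].
  assert (hjoin : forall c, c <=K b -> eqa pre c w (approx_join X all))
    by (intros c hc; exact (eqa_sym (approx_join_below (S := all) Logic.I hw hc))).
  apply (level_lub_transfer (w := w)).
  - intros c hc. exact (hjoin c (lt_le hc)).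
  - exact (hjoin b (@lt_irrefl _)).
  - exact (proj1 hw b (@lt_irrefl _)).
Qed.

End Model.

Theorem mainTheorem1 (L : Type) (le : L -> L -> Prop) (sup : (L -> Prop) -> L)
  (I : Type) (lt : I -> I -> Prop) (pre : I -> L -> L -> Prop) :
  complete_lattice le sup ->
  well_order lt -> inhabited I ->
  preorder_family pre ->
  Axiom1 lt pre -> Axiom2 pre -> Axiom3 le lt pre -> Axiom4 sup pre ->
  partial_order (sqle pre) /\
  (forall x : L, sqle pre (bot sup) x) /\
  (forall X : L -> Prop, (exists x, X x) -> exists y, is_lub (sqle pre) X y).
Proof.
  intros lattice ordinals _ preorders ax1 ax2 ax3 ax4.
  split; [|split].
  - exact (sqle_partial_order ordinals preorders ax1).
  - intro x. exact (bot_least lattice ordinals preorders ax2 ax3 x).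
  - intros X _. exact (exists_lub lattice ordinals preorders ax1 ax2 ax3 ax4 X).
Qed.
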